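(* Let $F$ be a field of characteristic $2$ and let $q=\langle a_1,\dots,a_n\rangle$ be a totally singular quadratic form over $F$ with not all $a_i=0$. Let $L/F$ be a finite field extension, $a\in F$, $\lambda\in L\setminus F$ and $K=F(\lambda)$. (i) If $L/F$ is separable and $a\in D_L(q_L)$, then $a\in D_F(q)$. (ii) If $a\in F^*$ and $a\lambda\in D_K(q_K)$, then $K/F$ is separable. (iii) If $a\in F^*$ and $a\lambda\in D_L(q_L)$, then $K/F$ is separable or $L/K$ is inseparable.
   Context: $\langle a_1,\dots,a_n\rangle$ denotes the quadratic form $a_1x_1^2+\dots+a_nx_n^2$. For a quadratic form $q$ on $V$ over a field $E$, $D_E(q)=\{q(x):x\in V\setminus\{0\}\}$, and $q_E$ denotes scalar extension. *)

From HB Require Import structures.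
From mathcomp Require Import all_boot all_order all_algebra all_field.
Set Implicit Arguments. Unset Strict Implicit. Unset Printing Implicit Defensive.
Import GRing.Theory.
Local Open Scope ring_scope.

Definition qvals_base (F : fieldType) (n : nat) (c : 'I_n -> F) (y : F) : Prop :=
  exists x : 'I_n -> F, (exists i, x i != 0) /\ y = \sum_(i < n) c i * x i ^+ 2.

(* D_E(q_E) for an intermediate field E (given as a subspace of L):
   values of q_E(x) = \sum c_i x_i^2 for x in E^n, x <> 0, viewed inside L. *)
Definition qvals (F : fieldType) (L : fieldExtType F) (n : nat) (c : 'I_n -> F)
  (E : {vspace L}) (y : L) : Prop :=
  exists x : 'I_n -> L, (forall i, x i \in E) /\ (exists i, x i != 0) /\
    y = \sum_(i < n) c i *: x i ^+ 2.

From HB Require Import structures.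
From mathcomp Require Import all_boot all_order all_algebra all_field.
From Stdlib Require Import Classical.
Set Implicit Arguments. Unset Strict Implicit. Unset Printing Implicit Defensive.
Import GRing.Theory.
Local Open Scope ring_scope.

(* Throughout F has characteristic 2, so squaring is the
   Frobenius endomorphism: it is additive and F-semilinear.
   Parts (ii) and (iii) are proved with derivations.  A derivation D of a
   field E kills every square of E (D(x^2) = 2 x Dx = 0), hence, being
   F-linear, kills every value of q over E.  If F(lambda)/F is inseparable
   there is a derivation of F(lambda) vanishing on F with D(lambda) <> 0;
   then D(a lambda) = a D(lambda) <> 0, so a lambda is not a value of q over
   F(lambda), which is (ii).  For (iii), when L/F(lambda) is separable this
   derivation extends to L and the same computation applies.
   Part (i) is linear algebra: if L/F is separable then L = F(L^2), so the
   squares of any F-basis (b_j) of L again form a basis, and the j-th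
   coordinate of z^2 in it is the square of the j-th coordinate of z.
   Reading a%:A = sum c_i x_i^2 in the basis (b_j^2) gives, for each j,
   a * e_j^2 = sum_i c_i y_ji^2 with e_j, y_ji in F the coordinates of 1 and
   of x_i; a suitable j yields a representation of a over F. *)

Lemma coord_neq0 (K : fieldType) (vT : vectType K) (U : {vspace vT}) m
    (X : m.-tuple vT) (v : vT) :
  basis_of U X -> v \in U -> v != 0 -> exists j, coord X j v != 0.
Proof.
move=> UX Uv; have [j nz_j _ | coord0] := pickP (fun j => coord X j v != 0).
  by exists j.
rewrite (coord_basis UX Uv) big1 ?eqxx // => j _.
by move/negbFE/eqP: (coord0 j) => ->; rewrite scale0r.
Qed.

Section CharacteristicTwo.
Variables (F : fieldType) (L : fieldExtType F).
Hypothesis pchar2F : 2%N \in [pchar F].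

Let pchar2L : 2%N \in [pchar L].
Proof. by rewrite pchar_lalg. Qed.

Lemma sqr_lin_comb (I : Type) (r : seq I) (f : I -> F) (b : I -> L) :
  (\sum_(i <- r) f i *: b i) ^+ 2 = \sum_(i <- r) f i ^+ 2 *: b i ^+ 2.
Proof.
rewrite -[LHS]/(GRing.pFrobenius_aut pchar2L _) rmorph_sum.
by apply: eq_bigr => i _; apply: exprZn.
Qed.

Lemma Derivation_sqr (E : {vspace L}) (D : 'End(L)) (x : L) :
  Derivation E D -> x \in E -> D (x ^+ 2) = 0.
Proof.
move=> derD Ex; rewrite expr2 (Derivation_mul derD Ex Ex) mulrC -mulr2n.
by rewrite -mulr_natr (pcharf0 pchar2L) mulr0.
Qed.

Lemma Derivation_qvals n (c : 'I_n -> F) (E : {vspace L}) (D : 'End(L)) y :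
  Derivation E D -> qvals c E y -> D y = 0.
Proof.
move=> derD [x [Ex [_ ->]]]; rewrite linear_sum big1 // => i _.
by rewrite linearZ /= (Derivation_sqr derD (Ex i)) scaler0.
Qed.

(* A derivation of K(x) vanishing on K and at x vanishes on all of K(x),
   since every element of K(x) is a polynomial in x over K. *)
Lemma Derivation_adjoin_ker (K : {subfield L}) (x : L) (D : 'End(L)) :
  Derivation <<K; x>> D -> (K <= lker D)%VS -> D x = 0 ->
  (<<K; x>> <= lker D)%VS.
Proof.
move=> derD /subvP DK0 Dx0; apply/subvP => _ /Fadjoin_polyP [p Kp ->].
rewrite memv_ker (Derivation_horner derD) ?memv_adjoin //; last first.
  by apply: polyOverSv Kp; apply: subv_adjoin.
suff -> : map_poly D p = 0 by rewrite Dx0 mulr0 horner0 add0r.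
apply/polyP => i; rewrite coef0 coef_map /=; apply/eqP; rewrite -memv_ker.
exact/DK0/(polyOverP Kp).
Qed.

(* An element x inseparable over K is moved by some derivation of K(x)
   vanishing on K (converse direction of Derivation_separableP). *)
Lemma inseparable_Derivation (K : {subfield L}) (x : L) :
  ~~ separable_element K x ->
  exists D : 'End(L), [/\ Derivation <<K; x>> D, (K <= lker D)%VS & D x != 0].
Proof.
move=> /Derivation_separableP sepNx; apply: NNPP => noD.
apply: sepNx => D derD DK0.
apply: Derivation_adjoin_ker => //; apply: NNPP => Dx.
by apply: noD; exists D; split => //; apply/eqP.
Qed.

Lemma Derivation_extend_separable (K E : {subfield L}) (D : 'End(L)) :
  (K <= E)%VS -> separable K E -> Derivation K D ->
  exists2 D' : 'End(L), Derivation E D' & {in K, D' =1 D}.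
Proof.
move=> sKE sepKE derD.
exists (extendDerivation (separable_generator K E) D K).
  rewrite {1}(eq_adjoin_separable_generator sepKE sKE).
  exact/extendDerivationP/separable_generatorP.
by move=> y Ky; rewrite extendDerivation_id.
Qed.

Lemma Derivation_qvals_scale n (c : 'I_n -> F) (E : {vspace L}) (D : 'End(L))
    (a : F) (l : L) :
  Derivation E D -> a != 0 -> qvals c E (a *: l) -> D l = 0.
Proof.
move=> derD a0 /(Derivation_qvals derD) /eqP.
by rewrite linearZ scaler_eq0 (negPf a0) => /eqP.
Qed.

(* Part (ii): if a * lambda is a value of q over F(lambda), then F(lambda)/F
   is separable; otherwise some derivation of F(lambda) over F moves lambda. *)
Lemma qvals_adjoin_separable n (c : 'I_n -> F) (a : F) (l : L) :
  a != 0 -> qvals c <<1%VS; l>>%VS (a *: l) -> separable 1%VS <<1%VS; l>>%VS.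
Proof.
move=> a0 ql; rewrite -[separable _ _](adjoin_separable_eq 1%AS l).
apply: contraT => /inseparable_Derivation [D [derD _ /eqP[]]].
exact: Derivation_qvals_scale derD a0 ql.
Qed.

(* Part (iii): if a * lambda is a value of q over L and L/F(lambda) is
   separable, the derivation moving lambda extends to L; so either
   F(lambda)/F is separable or L/F(lambda) is not. *)
Lemma qvals_tower_separable n (c : 'I_n -> F) (a : F) (l : L) :
  a != 0 -> qvals c fullv (a *: l) ->
  separable 1%VS <<1%VS; l>>%VS || ~~ separable <<1%VS; l>>%VS fullv.
Proof.
move=> a0 ql; rewrite -[separable 1%VS _](adjoin_separable_eq 1%AS l).
have [//|] := boolP (separable_element _ l).
move=> /inseparable_Derivation [D [derD _ /eqP Dl]] /=; apply/negP => sepL.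
have [D' derD' D'D] := Derivation_extend_separable (subvf _) sepL derD.
by apply: Dl; rewrite -D'D ?memv_adjoin ?(Derivation_qvals_scale derD' a0 ql).
Qed.

Section SquaredBasis.
Variables (m : nat) (X : m.-tuple L).
Hypothesis basisX : basis_of fullv X.

Definition sqr_tuple : m.-tuple L := map_tuple (fun b => b ^+ 2) X.

Lemma sqr_tupleE (j : 'I_m) : sqr_tuple`_j = X`_j ^+ 2.
Proof. by rewrite (nth_map 0) ?size_tuple. Qed.

Lemma sqr_expansion (z : L) :
  z ^+ 2 = \sum_j coord X j z ^+ 2 *: sqr_tuple`_j.
Proof.
rewrite {1}(coord_basis basisX (memvf z)) sqr_lin_comb.
by apply: eq_bigr => j _; rewrite sqr_tupleE.
Qed.

(* If L/F is separable, the squares of an F-basis of L are again an F-basis: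
   each y is separable, hence a polynomial over F in y^2, i.e. an
   F-combination of squares. *)
Lemma sqr_tuple_basis :
  separable 1%VS (fullv : {vspace L}) -> basis_of fullv sqr_tuple.
Proof.
move=> sepL; rewrite basisEdim size_tuple (size_basis basisX) leqnn andbT.
apply/subvP => y _.
have /Fadjoin_polyP [p Fp ->] : y \in <<1%AS; y ^+ 2>>%VS.
  rewrite -[y ^+ 2]/(y ^+ (2 ^ 1)) -(pcharf_p_separable _ _ _ pchar2L).
  exact/(separableP sepL)/memvf.
rewrite horner_coef; apply: rpred_sum => i _.
have /vlineP [k ->] := polyOverP Fp i.
rewrite -scalerAl mul1r -exprM mulnC exprM sqr_expansion.
apply/rpredZ/rpred_sum => j _; apply/rpredZ/memv_span.
by apply: mem_nth; rewrite size_tuple.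
Qed.

Lemma coord_sqr (j : 'I_m) (z : L) :
  basis_of fullv sqr_tuple -> coord sqr_tuple j (z ^+ 2) = coord X j z ^+ 2.
Proof.
by move=> basisS; rewrite (sqr_expansion z) coord_sum_free ?(basis_free basisS).
Qed.

End SquaredBasis.

(* With X a basis of L, comparing coordinates
   of a = sum_i c_i x_i^2 in the squared basis gives, for every j,
   a * e_j^2 = sum_i c_i y_ji^2, where e_j and y_ji are the j-th coordinates
   of 1 and of x_i. *)
Lemma qvals_base_of_separable n (c : 'I_n -> F) (a : F) :
  separable 1%VS (fullv : {vspace L}) ->
  qvals c fullv (a%:A : L) -> qvals_base c a.
Proof.
move=> sepL [x [_ [[i0 nz_xi0] qx]]].
pose X := vbasis (fullv : {vspace L}).
have basisX : basis_of fullv X := vbasisP _.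
have basisS := sqr_tuple_basis basisX sepL.
pose y j i := coord X j (x i).
have coord_eq j : a * coord X j 1 ^+ 2 = \sum_i c i * y j i ^+ 2.
  have := congr1 (coord (sqr_tuple X) j) qx.
  have -> : (a%:A : L) = a *: 1 ^+ 2 by rewrite expr1n.
  rewrite linearZ /= coord_sqr // linear_sum => ->; apply: eq_bigr => i _.
  by rewrite linearZ /= coord_sqr.
have [a0 | a_nz] := eqVneq a 0.
  have [j nz_yj] := coord_neq0 basisX (memvf (x i0)) nz_xi0.
  by exists (y j); split; [exists i0 | rewrite -coord_eq a0 mul0r].
have [j nz_e] := coord_neq0 basisX (memvf 1) (oner_neq0 L).
pose e := coord X j 1.
have rep : a = \sum_i c i * (y j i / e) ^+ 2.
  under eq_bigr do rewrite expr_div_n mulrA.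
  by rewrite -mulr_suml -coord_eq mulfK // expf_neq0.
exists (fun i => y j i / e); split => //.
have [i nz_i | all0] := pickP (fun i => y j i / e != 0); first by exists i.
move: a_nz; rewrite rep big1 ?eqxx // => i _.
by move/negbFE/eqP: (all0 i) => ->; rewrite expr0n mulr0.
Qed.

End CharacteristicTwo.

Theorem proposition4p1 (F : fieldType) (hchar : 2%N \in [pchar F])
  (n : nat) (c : 'I_n -> F) (hc : exists i, c i != 0)
  (L : fieldExtType F) (a : F) :
  (* (i) *)
  (separable 1%VS (fullv : {vspace L}) ->
     qvals c fullv (a%:A : L) -> qvals_base c a)
  /\
  (forall lambda : L, lambda \notin 1%VS ->
     (* (ii) *)
     (a != 0 -> qvals c <<1%VS; lambda>>%VS (a *: lambda) ->
        separable 1%VS <<1%VS; lambda>>%VS)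
     /\
     (* (iii) *)
     (a != 0 -> qvals c fullv (a *: lambda) ->
        separable 1%VS <<1%VS; lambda>>%VS
        || ~~ separable <<1%VS; lambda>>%VS fullv)).
Proof.
split; first exact: qvals_base_of_separable.
move=> lambda _; split.
  exact: qvals_adjoin_separable.
exact: qvals_tower_separable.
Qed.
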